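(* Let $\mathbf{u}$ be a Sturmian word with parameters $(\ell_0,\ell_1,\rho)$ which is fixed by a primitive morphism $\varphi_w$, $w\in\{a,b,\alpha,\beta\}^*$. (1) If $w \in \{b,\beta\}^*$, then $\rho = \ell_1$. (2) If $w \in \{b,\alpha\}^*$, then $\rho = 0$. (3) If $w \in \{a,\beta\}^*$, then $\rho = \ell_0+\ell_1$. (4) If $w \in \{a,\alpha\}^*$, then $\rho = \ell_0$.
   Context: Morphisms on $\{0,1\}^*$: $\varphi_a: 0\mapsto 0, 1 \mapsto 10$; $\varphi_b: 0 \mapsto 0, 1\mapsto 01$; $\varphi_\alpha: 0\mapsto 01, 1\mapsto 1$; $\varphi_\beta: 0\mapsto 10, 1 \mapsto 1$; for $w=w_0\cdots w_{m-1}$, $\varphi_w = \varphi_{w_0}\circ\cdots\circ\varphi_{w_{m-1}}$. A morphism is primitive if some power maps every letter to a word containing every letter. Two interval exchange words: given $\ell_0,\ell_1>0$, take either $I=[0,\ell_0+\ell_1)$, $I_0=[0,\ell_0)$, $I_1=[\ell_0,\ell_0+\ell_1)$ (lower case) or $I=(0,\ell_0+\ell_1]$, $I_0=(0,\ell_0]$, $I_1=(\ell_0,\ell_0+\ell_1]$ (upper case); $T(x)=x+\ell_1$ on $I_0$, $T(x)=x-\ell_0$ on $I_1$; for $\rho\in I$, $u_n = 0$ if $T^n(\rho)\in I_0$ and $u_n=1$ otherwise. With $\ell_1/(\ell_0+\ell_1)$ irrational these are the Sturmian words; ''Sturmian word with parameters $(\ell_0,\ell_1,\rho)$'' means such a lower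 or upper coding. *)

From mathcomp Require Import all_boot all_order all_algebra.
From mathcomp Require Import reals.
Set Implicit Arguments. Unset Strict Implicit. Unset Printing Implicit Defensive.
Import Order.TTheory GRing.Theory Num.Theory.
Local Open Scope ring_scope.

(* Letters of the alphabet 0 = false, 1 = true. *)
Inductive mletter := La | Lb | Lalpha | Lbeta.

Definition phil (l : mletter) (c : bool) : seq bool :=
  match l, c with
  | La, false => [:: false]          | La, true => [:: true; false]
  | Lb, false => [:: false]          | Lb, true => [:: false; true]
  | Lalpha, false => [:: false; true] | Lalpha, true => [:: true]
  | Lbeta, false => [:: true; false]  | Lbeta, true => [:: true]
  end.

Definition mapw (f : bool -> seq bool) (s : seq bool) : seq bool :=
  flatten (map f s).

Definition phiw (w : seq mletter) (c : bool) : seq bool :=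
  foldr (fun l s => mapw (phil l) s) [:: c] w.

Definition primitive (f : bool -> seq bool) : Prop :=
  exists k : nat, forall c d : bool, d \in iter k (mapw f) [:: c].

(* The infinite word u is fixed by f: f(u) = u, i.e. for every n the image of
   the prefix of length n of u is a prefix of u (f is nonerasing here). *)
Definition fixed_by (f : bool -> seq bool) (u : nat -> bool) : Prop :=
  forall n i : nat, (i < size (mapw f (mkseq u n)))%N ->
    nth false (mapw f (mkseq u n)) i = u i.

Definition irrational {R : realType} (x : R) : Prop :=
  forall p q : int, q != 0 -> x * q%:~R != p%:~R.

(* Lower-case exchange: I = [0, l0+l1), I_0 = [0, l0). *)
Definition T_low {R : realType} (l0 l1 x : R) : R :=
  if x < l0 then x + l1 else x - l0.
(* Upper-case exchange: I = (0, l0+l1], I_0 = (0, l0]. *)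
Definition T_up {R : realType} (l0 l1 x : R) : R :=
  if x <= l0 then x + l1 else x - l0.

Definition lower_coding {R : realType} (l0 l1 rho : R) (n : nat) : bool :=
  ~~ (iter n (T_low l0 l1) rho < l0).
Definition upper_coding {R : realType} (l0 l1 rho : R) (n : nat) : bool :=
  ~~ (iter n (T_up l0 l1) rho <= l0).

Definition sturmian {R : realType} (l0 l1 rho : R) (u : nat -> bool) : Prop :=
  0 < l0 /\ 0 < l1 /\ irrational (l1 / (l0 + l1)) /\
  ((0 <= rho /\ rho < l0 + l1 /\ forall n, u n = lower_coding l0 l1 rho n) \/
   (0 < rho /\ rho <= l0 + l1 /\ forall n, u n = upper_coding l0 l1 rho n)).

Definition in_b_beta (l : mletter) : bool :=
  match l with Lb | Lbeta => true | _ => false end.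
Definition in_b_alpha (l : mletter) : bool :=
  match l with Lb | Lalpha => true | _ => false end.
Definition in_a_beta (l : mletter) : bool :=
  match l with La | Lbeta => true | _ => false end.
Definition in_a_alpha (l : mletter) : bool :=
  match l with La | Lalpha => true | _ => false end.

From Pilot Require Import Defs.
From mathcomp Require Import all_boot all_order all_algebra.
From mathcomp Require Import reals.
From mathcomp Require Import zify ring lra.
Set Implicit Arguments. Unset Strict Implicit. Unset Printing Implicit Defensive.
Import Order.TTheory GRing.Theory Num.Theory.
Local Open Scope ring_scope.

(* Write P = (l0, l1, rho).  If u codes the exchange with parameters P and its
   first n letters contain k ones, then T^n(rho) = rho + n l1 - k (l0 + l1) lies
   in the domain of T; conversely this counting condition for all n pins down
   the slope l1 / (l0 + l1) and, the slope being irrational (density of n a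
   mod 1), the intercept rho / (l0 + l1), i.e. P up to a positive factor.  Each
   phi_l turns a coding of P into a coding of an explicit P' linear in P, with
   l0' + l1' > l0 + l1.  Hence a fixed point of phi_w codes both P and
   lambda P for some lambda > 1.  Each of the four letter classes preserves a
   linear form rho - c0 l0 - c1 l1, which therefore vanishes. *)

Lemma size_count_negb (s : seq bool) : size s = (count negb s + count id s)%N.
Proof. by rewrite addnC count_predC. Qed.

Lemma mapw_cat f s1 s2 : mapw f (s1 ++ s2) = mapw f s1 ++ mapw f s2.
Proof. by rewrite /mapw map_cat flatten_cat. Qed.

Lemma mapw_rcons f s c : mapw f (rcons s c) = mapw f s ++ f c.
Proof. by rewrite -cats1 mapw_cat /mapw /= cats0. Qed.

Lemma size_mapw f s : size (mapw f s) =
  (count negb s * size (f false) + count id s * size (f true))%N.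
Proof. by elim: s => [|[] s IH] //=; rewrite size_cat IH; lia. Qed.

Lemma count_mapw f s : count id (mapw f s) =
  (count negb s * count id (f false) + count id s * count id (f true))%N.
Proof. by elim: s => [|[] s IH] //=; rewrite count_cat IH; lia. Qed.

Lemma mapw_phiw_nil s : mapw (phiw [::]) s = s.
Proof. exact: flatten_seq1. Qed.

Lemma mapw_phiw_cons l w s :
  mapw (phiw (l :: w)) s = mapw (phil l) (mapw (phiw w) s).
Proof.
by elim: s => [|c s IH] //=; rewrite /mapw /= -!/(mapw _ _) IH mapw_cat.
Qed.

Lemma primitive_phiw_size_gt0 (w : seq mletter) :
  primitive (phiw w) -> (0 < size w)%N.
Proof.
case: w => // -[k prim]; have := prim false true.
rewrite (_ : iter k _ _ = [:: false]) //.
by elim: k {prim} => //= k ->; rewrite mapw_phiw_nil.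
Qed.

Lemma size_phiw_gt0 w c : (0 < size (phiw w c))%N.
Proof.
elim: w => [|l w IH] //=; rewrite size_mapw.
case: (phiw w c) IH => [|d s] //= _; case: l; case: d => /=; lia.
Qed.

Lemma take_mkseq (T : Type) (f : nat -> T) k n :
  (k <= n)%N -> take k (mkseq f n) = mkseq f k.
Proof. by move=> kn; rewrite /mkseq -map_take take_iota (minn_idPl kn). Qed.

Section Diophantine.
Variable R : realType.

Lemma dirichlet_approx (a e : R) : 0 < e ->
  exists (d : nat) (m : int), (0 < d)%N /\ `|m%:~R - d%:R * a| < e.
Proof.
move=> e_gt0; pose N := (Num.truncn e^-1).+1.
have Ne : 1 < N%:R * e by rewrite -ltr_pdivrMr // div1r truncnS_gt.
have N_gt0 : (0 : R) < N%:R by rewrite ltr0n.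
pose frac (i : nat) := i%:R * a - (Num.floor (i%:R * a))%:~R.
have frac01 i : 0 <= N%:R * frac i < N%:R.
  have /andP[h1 h2] := floor_itv (i%:R * a); rewrite intrD in h2.
  apply/andP; split; first by apply: mulr_ge0; rewrite // /frac; lra.
  by rewrite -[X in _ < X]mulr1 ltr_pM2l // /frac; lra.
pose bin (i : 'I_N.+1) : 'I_N := inord (Num.truncn (N%:R * frac i)).
have binE i : nat_of_ord (bin i) = Num.truncn (N%:R * frac i).
  by have /andP[f0 f1] := frac01 i; rewrite inordK // truncn_lt_nat.
have close i j : bin i = bin j -> `|frac j - frac i| < e.
  move=> /(congr1 val); rewrite /= !binE => bin_ij.
  have /andP[fi0 _] := frac01 i; have /andP[fj0 _] := frac01 j.
  have := truncn_itv fi0; have := truncn_itv fj0; rewrite bin_ij -natr1.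
  move=> /andP[j1 j2] /andP[i1 i2].
  have : `|N%:R * (frac j - frac i)| < 1.
    by rewrite mulrBr ltr_norml; apply/andP; split; lra.
  by rewrite normrM gtr0_norm // => lt1; rewrite -(ltr_pM2l N_gt0); lra.
have [i [j ij bij]] : exists i, exists2 j, i != j & bin i = bin j.
  apply/injectivePn; apply: contraTN isT => /injectiveP bin_inj.
  by have := leq_card _ bin_inj; rewrite !card_ord ltnn.
wlog lt_ij : i j ij bij / (i < j)%N => [sym|].
  case: (ltngtP i j) => [lt|lt|/val_inj eq_ij]; first exact: sym ij bij lt.
    by apply: (sym j i) (esym bij) lt; rewrite eq_sym.
  by rewrite eq_ij eqxx in ij.
exists (j - i)%N, (Num.floor (j%:R * a) - Num.floor (i%:R * a)); split.
  by rewrite subn_gt0.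
rewrite (_ : _%:~R - _ = - (frac j - frac i)) ?normrN; first exact: close bij.
by rewrite /frac natrB ?(ltnW lt_ij) // intrB; ring.
Qed.

Lemma shifted_multiple_between (lo hi g : R) : g != 0 -> `|g| < hi - lo ->
  exists (K : nat) (k : int), lo < k%:~R + K%:R * g < hi.
Proof.
wlog g_gt0 : lo hi g / 0 < g => [pos g0 g_lt|_].
  case: (ltrgtP g 0) => [g_lt0|g_gt0|g_eq0]; last by rewrite g_eq0 eqxx in g0.
    have [K [k hk]] :
        exists (K : nat) (k : int), - hi < k%:~R + K%:R * - g < - lo.
      by apply: pos; rewrite ?oppr_gt0 ?oppr_eq0 ?normrN //; lra.
    by exists K, (- k); rewrite intrN; lra.
  exact: pos.
rewrite gtr0_norm // => g_lt; pose k := Num.floor lo.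
have /andP[k_le _] := floor_itv lo; rewrite -/k in k_le.
have x_ge0 : 0 <= (lo - k%:~R) / g by apply: divr_ge0; lra.
have := truncn_itv x_ge0; rewrite ler_pdivlMr // ltr_pdivrMr // -natr1.
move: (Num.truncn _) => T /andP[T1 T2].
by exists T.+1, k; rewrite -natr1; apply/andP; split; lra.
Qed.

Lemma irrational_translates_dense (a lo hi : R) :
  Defs.irrational a -> lo < hi ->
  exists (n : nat) (k : int), lo < k%:~R - n%:R * a < hi.
Proof.
move=> a_irr lo_hi; have [|d [m [d_gt0]]] := @dirichlet_approx a (hi - lo).
  by rewrite subr_gt0.
set g := _ - _ => g_lt.
have g_neq0 : g != 0.
  have := a_irr m d%:Z; rewrite eqz_nat -lt0n d_gt0 -pmulrn => /(_ isT).
  by apply: contra; rewrite subr_eq0 mulrC => /eqP <-.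
have [K [k hk]] := shifted_multiple_between g_neq0 g_lt.
exists (K * d)%N, (k + K%:Z * m).
by rewrite intrD intrM -pmulrn natrM; move: hk; rewrite /g; lra.
Qed.

Definition near_line (a x : R) (c : nat -> nat) :=
  forall n, (c n)%:R <= n%:R * a + x <= (c n)%:R + 1.

Lemma near_line_slope_unique a a' x x' c :
  near_line a x c -> near_line a' x' c -> a = a'.
Proof.
wlog lt_aa' : a a' x x' / a < a' => [sym ca ca'|ca ca'].
  case: (ltrgtP a a') => // lt; first exact: (sym _ _ _ _ lt ca ca').
  by apply/esym; apply: (sym _ _ _ _ lt ca' ca).
pose n := (Num.truncn ((x - x' + 1) / (a' - a))).+1.
have := truncnS_gt ((x - x' + 1) / (a' - a)).
rewrite ltr_pdivrMr ?subr_gt0 // -/n.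
by have /andP[c1 _] := ca n; have /andP[_ c2] := ca' n; lra.
Qed.

Lemma near_line_intercept_unique a x x' c : Defs.irrational a ->
  near_line a x c -> near_line a x' c -> x = x'.
Proof.
move=> a_irr; wlog lt_xx' : x x' / x < x' => [sym cx cx'|cx cx'].
  case: (ltrgtP x x') => // lt; first exact: (sym _ _ lt cx cx').
  by apply/esym; apply: (sym _ _ lt cx' cx).
have [n [k /andP[k1 k2]]] := irrational_translates_dense a_irr lt_xx'.
have /andP[c1 _] := cx n; have /andP[_ c2] := cx' n.
have lt1 : ((c n)%:Z%:~R : R) < k%:~R by rewrite -pmulrn; lra.
have lt2 : (k%:~R : R) < ((c n)%:Z + 1)%:~R by rewrite intrD -pmulrn; lra.
by rewrite !ltr_int in lt1 lt2; lia.
Qed.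

End Diophantine.

Section IntervalExchange.
Variable R : realType.

Record iet := Iet { len0 : R; len1 : R; start : R }.

Definition total P := len0 P + len1 P.
Definition slope P := len1 P / total P.
Definition intercept P := start P / total P.
Definition scale k P := Iet (k * len0 P) (k * len1 P) (k * start P).

Definition nonneg P := (0 <= len0 P) && (0 <= len1 P).
Definition positive P := (0 < len0 P) && (0 < len1 P).

Definition in_domain upper P (r : R) :=
  if upper then (0 < r) && (r <= total P) else (0 <= r) && (r < total P).

(* T^n(start) when the first n letters of the coding contain k ones. *)
Definition residual P (n k : nat) := start P + n%:R * len1 P - k%:R * total P.

Definition mech_word upper P (s : seq bool) :=
  in_domain upper P (residual P (size s) (count id s)).

Definition mech_prefixes upper P (p : seq bool) :=
  forall k, (k <= size p)%N -> mech_word upper P (take k p).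

Definition mechanical upper P (u : nat -> bool) :=
  forall n, mech_word upper P (mkseq u n).

Lemma residual_add P n k n' k' : residual P (n + n') (k + k') =
  residual P n k + n'%:R * len1 P - k'%:R * total P.
Proof. by rewrite /residual !natrD; ring. Qed.

Definition exchange upper (a b : R) := if upper then T_up a b else T_low a b.
Definition in_I0 upper (a x : R) := if upper then x <= a else x < a.

Lemma exchangeE upper a b x :
  exchange upper a b x = x + b - (~~ in_I0 upper a x)%:R * (a + b).
Proof.
rewrite /exchange /T_up /T_low /in_I0.
by case: upper; case: ifP => _ /=; rewrite ?mul0r ?mul1r; ring.
Qed.

Lemma exchange_domain upper P x : nonneg P -> in_domain upper P x ->
  in_domain upper P (exchange upper (len0 P) (len1 P) x).
Proof.
case: P => a b r /andP[/= a0 b0].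
case: upper; rewrite /exchange /in_domain /total /=.
- by rewrite /T_up; case: (lerP x a) => h /andP[x0 x1]; apply/andP; split; lra.
- by rewrite /T_low; case: (ltrP x a) => h /andP[x0 x1]; apply/andP; split; lra.
Qed.

Lemma coding_mechanical upper P u : nonneg P -> in_domain upper P (start P) ->
  (forall n, u n = ~~ in_I0 upper (len0 P)
                     (iter n (exchange upper (len0 P) (len1 P)) (start P))) ->
  mechanical upper P u.
Proof.
move=> P0 P_dom u_code n.
have orbit m : residual P m (count id (mkseq u m)) =
               iter m (exchange upper (len0 P) (len1 P)) (start P).
  elim: m => [|m IH]; first by rewrite /residual !mul0r subr0 addr0.
  rewrite mkseqS -cats1 count_cat /= addn0 -addn1 residual_add IH.
  by rewrite /= exchangeE -u_code mul1r.
rewrite /mech_word size_mkseq orbit.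
by elim: n => //= n IH; apply: exchange_domain.
Qed.

Lemma sturmian_mechanical l0 l1 rho u : sturmian l0 l1 rho u ->
  exists upper, mechanical upper (Iet l0 l1 rho) u.
Proof.
case=> l0_gt0 [l1_gt0 [_ [[r0 [r1 u_code]] | [r0 [r1 u_code]]]]];
  [exists false | exists true]; apply: coding_mechanical => //;
  by rewrite /nonneg /in_domain /total /= ?r0 ?r1 ?ltW.
Qed.

(* phi_l maps a coding of the exchange with parameters P to a coding of the
   exchange with parameters act l P. *)
Definition act (l : mletter) P :=
  let: Iet a b r := P in
  match l with
  | La => Iet (a + b) b (r + b)
  | Lb => Iet (a + b) b r
  | Lalpha => Iet a (a + b) r
  | Lbeta => Iet a (a + b) (r + a)
  end.

Definition actw w P := foldr act P w.

Lemma residual_mapw l P s :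
  residual (act l P) (size (mapw (phil l) s)) (count id (mapw (phil l) s)) =
  residual P (size s) (count id s) + (start (act l P) - start P).
Proof.
rewrite size_mapw count_mapw [size s]size_count_negb.
by case: P => a b r; case: l; rewrite /residual /total /= ?natrD ?natrM; ring.
Qed.

Lemma nonneg_act l P : nonneg P -> nonneg (act l P).
Proof.
by case: P => a b r /andP[/= a0 b0]; case: l; apply/andP; split => /=; lra.
Qed.

Lemma mech_word_mapw upper l P s : nonneg P ->
  mech_word upper P s -> mech_word upper (act l P) (mapw (phil l) s).
Proof.
rewrite /mech_word residual_mapw.
case: P => a b r /andP[/= a0 b0]; move: (residual _ _ _) => x.
by case: l; case: upper; rewrite /in_domain /total /= => /andP[x0 x1];
  apply/andP; split; lra.
Qed.

Lemma mech_word_mapw_head upper l P s c : nonneg P -> size (phil l c) = 2%N ->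
  mech_word upper P s -> mech_word upper P (rcons s c) ->
  mech_word upper (act l P) (mapw (phil l) s ++ take 1 (phil l c)).
Proof.
rewrite /mech_word -cats1 !size_cat !count_cat !residual_add residual_mapw.
case: P => a b r /andP[/= a0 b0]; move: (residual _ _ _) => x.
by case: l; case: c => //= _; case: upper;
  rewrite /in_domain /total /= => /andP[x0 x1] /andP[y0 y1];
  apply/andP; split; lra.
Qed.

Lemma mech_prefixes_mapw upper l P p : nonneg P ->
  mech_prefixes upper P p -> mech_prefixes upper (act l P) (mapw (phil l) p).
Proof.
move=> P0; elim/last_ind: p => [|q c IH] Hp k.
  by rewrite leqn0 => /eqP ->; exact: (mech_word_mapw l P0 (Hp 0%N isT)).
have {IH} IH : mech_prefixes upper (act l P) (mapw (phil l) q).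
  apply: IH => j jq; have := Hp j; rewrite size_rcons -cats1 takel_cat //.
  by apply; apply: leqW.
(* A prefix of phi_l (q c) is either a prefix of phi_l q, or all of it, or
   phi_l q followed by the first letter of a two-letter image of c. *)
rewrite mapw_rcons size_cat take_cat => kle.
case: ltnP => [kq|qk]; first exact/IH/ltnW.
set i := (k - _)%N; have [->|i0] := posnP i.
  by rewrite take0 cats0 -[X in mech_word _ _ X]take_size; apply: IH.
have [fi|ifc] := leqP (size (phil l c)) i.
  rewrite take_oversize // -mapw_rcons.
  by have := Hp _ (leqnn _); rewrite take_size; apply: mech_word_mapw.
have f_le2 : (size (phil l c) <= 2)%N by case: (l); case: (c).
have [-> f2] : i = 1%N /\ size (phil l c) = 2%N by lia.
apply: mech_word_mapw_head => //.
  have := Hp (size q); rewrite size_rcons -cats1 takel_cat // take_size.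
  by apply.
by have := Hp _ (leqnn _); rewrite take_size.
Qed.

Lemma nonneg_actw w P : nonneg P -> nonneg (actw w P).
Proof. by move=> P0; elim: w => //= l w; apply: nonneg_act. Qed.

Lemma mech_prefixes_phiw upper w P p : nonneg P ->
  mech_prefixes upper P p -> mech_prefixes upper (actw w P) (mapw (phiw w) p).
Proof.
move=> P0 Hp; elim: w => [|l w IH] /=; first by rewrite mapw_phiw_nil.
by rewrite mapw_phiw_cons; apply: mech_prefixes_mapw IH; apply: nonneg_actw.
Qed.

Lemma mechanical_prefixes upper P u n :
  mechanical upper P u -> mech_prefixes upper P (mkseq u n).
Proof. by move=> Hu k; rewrite size_mkseq => kn; rewrite take_mkseq. Qed.

Lemma size_mapw_phiw w s : (size s <= size (mapw (phiw w) s))%N.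
Proof.
rewrite size_mapw [X in (X <= _)%N]size_count_negb.
by apply: leq_add; apply: leq_pmulr; apply: size_phiw_gt0.
Qed.

Lemma fixed_by_take w u n :
  fixed_by (phiw w) u -> take n (mapw (phiw w) (mkseq u n)) = mkseq u n.
Proof.
move=> fix_u; set s := mapw _ _.
have ns : (n <= size s)%N.
  by rewrite -[X in (X <= _)%N](size_mkseq u) size_mapw_phiw.
apply: (@eq_from_nth _ false); first by rewrite size_takel ?size_mkseq.
move=> i; rewrite size_takel // => i_n.
by rewrite nth_take // nth_mkseq // fix_u //; apply: leq_trans ns.
Qed.

Lemma mechanical_fixed upper w P u : nonneg P -> fixed_by (phiw w) u ->
  mechanical upper P u -> mechanical upper (actw w P) u.
Proof.
move=> P0 fix_u Hu n; rewrite -(fixed_by_take n fix_u).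
apply: (mech_prefixes_phiw (w := w) P0 (mechanical_prefixes (n := n) Hu)).
by rewrite -[X in (X <= _)%N](size_mkseq u) size_mapw_phiw.
Qed.

Lemma mechanical_near_line upper P u : 0 < total P -> mechanical upper P u ->
  near_line (slope P) (intercept P) (fun n => count id (mkseq u n)).
Proof.
move=> L_gt0 Hu n; move: {Hu}(Hu n); rewrite /mech_word /in_domain size_mkseq.
move: (count id _) => k; rewrite /slope /intercept mulrA -mulrDl.
rewrite ler_pdivlMr // ler_pdivrMr // /residual.
by case: upper => /andP[r0 r1]; apply/andP; split; lra.
Qed.

Lemma mechanical_proportional upper upper' P Q u :
  Defs.irrational (slope P) -> 0 < total P -> 0 < total Q ->
  mechanical upper P u -> mechanical upper' Q u ->
  scale (total P) Q = scale (total Q) P.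
Proof.
move=> P_irr LP LQ HP HQ.
have nP := mechanical_near_line LP HP; have nQ := mechanical_near_line LQ HQ.
have e_slope := near_line_slope_unique nP nQ; rewrite -e_slope in nQ.
have e_icpt := near_line_intercept_unique P_irr nP nQ.
move: e_slope e_icpt; rewrite /slope /intercept.
move=> /eqP; rewrite eqr_div ?lt0r_neq0 // => /eqP e1.
move=> /eqP; rewrite eqr_div ?lt0r_neq0 // => /eqP e2.
by move: e1 e2; case: P Q {P_irr LP LQ HP HQ nP nQ} => a b r [a' b' r'];
  rewrite /scale /total /= => e1 e2; congr Iet; lra.
Qed.

Definition offset (c0 c1 : bool) P := start P - c0%:R * len0 P - c1%:R * len1 P.

(* The classes {b, beta}, {b, alpha}, {a, beta}, {a, alpha} of the theorem are
   keeps_offset c0 c1 for (c0, c1) = (0, 1), (0, 0), (1, 1), (1, 0). *)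
Definition keeps_offset (c0 c1 : bool) (l : mletter) :=
  match l with La => c0 | Lb => ~~ c0 | Lalpha => ~~ c1 | Lbeta => c1 end.

Lemma offset_scale c0 c1 k P : offset c0 c1 (scale k P) = k * offset c0 c1 P.
Proof. by rewrite /offset /=; ring. Qed.

Lemma offset_act c0 c1 l P :
  keeps_offset c0 c1 l -> offset c0 c1 (act l P) = offset c0 c1 P.
Proof.
case: P => a b r; case: l; case: c0; case: c1; rewrite /offset /= => // _.
all: ring.
Qed.

Lemma offset_actw c0 c1 w P :
  all (keeps_offset c0 c1) w -> offset c0 c1 (actw w P) = offset c0 c1 P.
Proof. by elim: w => //= l w IH /andP[keep /IH <-]; apply: offset_act. Qed.

Lemma positive_act l P : positive P -> positive (act l P).
Proof.
by case: P => a b r /andP[/= a0 b0]; case: l; apply/andP; split => /=; lra.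
Qed.

Lemma positive_actw w P : positive P -> positive (actw w P).
Proof. by move=> P_pos; elim: w => //= l w; apply: positive_act. Qed.

Lemma total_act_gt l P : positive P -> total P < total (act l P).
Proof.
by case: P => a b r /andP[/= a0 b0]; case: l; rewrite /total /=; lra.
Qed.

Lemma total_actw_ge w P : positive P -> total P <= total (actw w P).
Proof.
move=> P_pos; elim: w => //= l w IH.
exact/(le_trans IH)/ltW/total_act_gt/positive_actw.
Qed.

Lemma total_actw_gt (w : seq mletter) P :
  positive P -> (0 < size w)%N -> total P < total (actw w P).
Proof.
move=> P_pos; case: w => // l w _.
apply: le_lt_trans (total_actw_ge w P_pos) _.
exact/total_act_gt/positive_actw.
Qed.

Lemma sturmian_fixed_start c0 c1 (l0 l1 rho : R) u w :
  sturmian l0 l1 rho u -> primitive (phiw w) -> fixed_by (phiw w) u ->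
  all (keeps_offset c0 c1) w -> rho = c0%:R * l0 + c1%:R * l1.
Proof.
move=> stu prim fix_u keep; set P := Iet l0 l1 rho.
have [l0_gt0 [l1_gt0 [irr _]]] := stu.
have P_irr : Defs.irrational (slope P) := irr.
have P_pos : positive P by apply/andP.
have P_nonneg : nonneg P by apply/andP; split; apply: ltW.
have [upper Hu] := sturmian_mechanical stu.
have HQ := mechanical_fixed P_nonneg fix_u Hu.
have LP : 0 < total P by rewrite /total /=; lra.
have LPQ := total_actw_gt P_pos (primitive_phiw_size_gt0 prim).
have := mechanical_proportional P_irr LP (lt_trans LP LPQ) Hu HQ.
move=> /(congr1 (offset c0 c1)).
rewrite !offset_scale offset_actw // => e.
have : (total (actw w P) - total P) * offset c0 c1 P = 0.
  by rewrite mulrBl e subrr.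
by move/eqP; rewrite mulf_eq0 subr_eq0 gt_eqF //= /offset /= => /eqP; lra.
Qed.

End IntervalExchange.

Theorem lemma21 (R : realType) (l0 l1 rho : R) (u : nat -> bool)
    (w : seq mletter) :
  sturmian l0 l1 rho u -> primitive (phiw w) -> fixed_by (phiw w) u ->
  [/\ (all in_b_beta w -> rho = l1),
      (all in_b_alpha w -> rho = 0),
      (all in_a_beta w -> rho = l0 + l1)
    & (all in_a_alpha w -> rho = l0)].
Proof.
move=> stu prim fix_u.
have start_eq c0 c1 (C : pred mletter) : C =1 keeps_offset c0 c1 -> all C w ->
    rho = c0%:R * l0 + c1%:R * l1.
  by move=> eC; rewrite (eq_all eC); exact: sturmian_fixed_start stu prim fix_u.
split=> hw.
- by rewrite (start_eq false true in_b_beta) //= ?mul0r ?add0r ?mul1r //; case.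
- by rewrite (start_eq false false in_b_alpha) //= ?mul0r ?add0r //; case.
- by rewrite (start_eq true true in_a_beta) //= ?mul1r //; case.
- by rewrite (start_eq true false in_a_alpha) //= ?mul0r ?mul1r ?addr0 //; case.
Qed.
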